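(* For $n\ge1$, the height one prime ideals of $\mathbb{S}_n$ are exactly $\mathfrak p_1,\dots,\mathfrak p_n$. These are $n$ pairwise distinct and pairwise incomparable primes, and $\mathfrak p_1\cap\cdots\cap\mathfrak p_n=\mathfrak p_1\cdots\mathfrak p_n=F(1)\otimes\cdots\otimes F(n)$.
   Context: $K$ is a field. $\mathbb{S}_n$ is the $K$-algebra generated by $x_1,\dots,x_n,y_1,\dots,y_n$ subject to the defining relations $y_ix_i=1$ for all $i$, and $[x_i,y_j]=[x_i,x_j]=[y_i,y_j]=0$ for all $i\ne j$. For each $i$, $\mathbb{S}_1(i)$ is the subalgebra generated by $x_i,y_i$, and $\mathbb{S}_n=\mathbb{S}_1(1)\otimes\cdots\otimes\mathbb{S}_1(n)$. $F(i)=\bigoplus_{k,l\in\mathbb N}K(x_i^ky_i^l-x_i^{k+1}y_i^{l+1})$ is an ideal of $\mathbb{S}_1(i)$. Define $\mathfrak p_i=\mathbb{S}_1(1)\otimes\cdots\otimes\mathbb{S}_1(i-1)\otimes F(i)\otimes\mathbb{S}_1(i+1)\otimes\cdots\otimes\mathbb{S}_1(n)$; then $\mathbb{S}_n/\mathfrak p_i\cong\big(\bigotimes_{j\ne i}\mathbb{S}_1(j)\big)\otimes K[x_i,x_i^{-1}]$. The height of a prime is the supremum of lengths of strictly descending chains of primes starting from it. *)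

From HB Require Import structures.
From mathcomp Require Import all_boot all_order all_algebra.
Set Implicit Arguments. Unset Strict Implicit. Unset Printing Implicit Defensive.
Import GRing.Theory.
Local Open Scope ring_scope.

Section RingIdeals.
Variable R : pzRingType.

Definition is_ideal (I : R -> Prop) : Prop :=
  [/\ I 0, (forall a b, I a -> I b -> I (a + b)), (forall a, I a -> I (- a))
    & (forall r a, I a -> I (r * a) /\ I (a * r))].

Definition subid (I J : R -> Prop) : Prop := forall a, I a -> J a.
Definition eqid (I J : R -> Prop) : Prop := forall a, I a <-> J a.
Definition ssubid (I J : R -> Prop) : Prop := subid I J /\ exists a, J a /\ ~ I a.

Definition is_prime (P : R -> Prop) : Prop :=
  [/\ is_ideal P, ~ P 1 &
      forall I J, is_ideal I -> is_ideal J ->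
        (forall a b, I a -> J b -> P (a * b)) -> subid I P \/ subid J P].

Definition prime_chain_from (P : R -> Prop) (m : nat) : Prop :=
  exists f : nat -> R -> Prop,
    [/\ eqid (f 0%N) P, (forall k, (k <= m)%N -> is_prime (f k))
      & (forall k, (k < m)%N -> ssubid (f k.+1) (f k))].

Definition prime_height (P : R -> Prop) (h : nat) : Prop :=
  prime_chain_from P h /\ ~ prime_chain_from P h.+1.

Definition prod_ideal (n : nat) (I : 'I_n -> R -> Prop) (a : R) : Prop :=
  exists m (g : 'I_m -> 'I_n -> R),
    (forall t i, I i (g t i)) /\ a = \sum_(t < m) \prod_(i < n) g t i.
End RingIdeals.

Section Sn.
Variables (K : fieldType) (A : algType K) (n : nat) (x y : 'I_n -> A).

Definition gS (j : 'I_n) (k l : nat) : A := x j ^+ k * y j ^+ l.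
(* spanning element x_j^k y_j^l - x_j^{k+1} y_j^{l+1} of F(j) *)
Definition gF (j : 'I_n) (k l : nat) : A := gS j k l - gS j k.+1 l.+1.

Definition smon (al be : {ffun 'I_n -> nat}) : A := \prod_(j < n) gS j (al j) (be j).

Definition Sn_relations : Prop :=
  (forall i, y i * x i = 1) /\
  (forall i j, i != j ->
     [/\ x i * y j = y j * x i, x i * x j = x j * x i & y i * y j = y j * y i]).

(* the standard monomials form a K-basis of A
   (together with the relations this says A is (isomorphic to) S_n) *)
Definition smon_basis : Prop :=
  (forall a : A, exists m (c : 'I_m -> K) (al be : 'I_m -> {ffun 'I_n -> nat}),
      a = \sum_(t < m) c t *: smon (al t) (be t)) /\
  (forall m (c : 'I_m -> K) (al be : 'I_m -> {ffun 'I_n -> nat}),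
      injective (fun t => (al t, be t)) ->
      \sum_(t < m) c t *: smon (al t) (be t) = 0 -> forall t, c t = 0).

(* p_i = S_1(1) ⊗ ... ⊗ F(i) ⊗ ... ⊗ S_1(n): span of products of spanning elements *)
Definition pid (i : 'I_n) (a : A) : Prop :=
  exists m (c : 'I_m -> K) (k l : 'I_m -> 'I_n -> nat),
    a = \sum_(t < m) c t *:
          \prod_(j < n) (if j == i then gF j (k t j) (l t j) else gS j (k t j) (l t j)).

Definition Ftens (a : A) : Prop :=
  exists m (c : 'I_m -> K) (k l : 'I_m -> 'I_n -> nat),
    a = \sum_(t < m) c t *: \prod_(j < n) gF j (k t j) (l t j).
End Sn.

From Pilot Require Import Defs.
From HB Require Import structures.
From mathcomp Require Import all_boot all_order all_algebra zify.
From Stdlib Require Import Classical.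
Set Implicit Arguments. Unset Strict Implicit. Unset Printing Implicit Defensive.
Import GRing.Theory.
Local Open Scope ring_scope.

(* The whole
   argument is organised around the operators Delta_i a = a - x_i a y_i.
   - After some facts on commuting products and ideals, we develop the
     monomial calculus of A and the linear algebra of the monomial basis
     (coefficients mcoef, linear extension extend).
   - p_i is the image of Delta_i and F(1) ⊗ ... ⊗ F(n) the image of
     Delta_1 o ... o Delta_n (span_dimage).  A projection proj i, which reduces
     the exponents of x_i and y_i, has kernel p_i and commutes with the other
     Delta_j; hence the image of Delta_r is the intersection of the p_j, j in r
     (dimageP), and p_i is a two-sided ideal (pid_ideal).
   - With the idempotents e_j = 1 - x_j y_j and E = prod_j e_j, sandwiching a
     minimal monomial shows that every nonzero ideal contains E (ideal_Eall).
     So the zero ideal is prime, and a nonzero prime contains the product of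
     the p_j, hence some p_j (prime_nonzero_pid).
   - p_i is prime (pid_prime): modulo p_i, every element outside p_i can be
     sandwiched onto E'_i R(x_i), R a nonzero polynomial, where
     E'_i = prod_(j != i) e_j; such elements are closed under products and lie
     outside p_i.  The element Delta_i 1 separates p_i from p_j (ei_notin).
   Hence 0 ⊊ p_i is a maximal chain of primes, a prime of height one contains
   and therefore equals some p_j, and the statements on intersection and
   product follow from dimageP. *)

Section CommutingProducts.
Variable R : pzRingType.
Implicit Types (I : eqType).

Lemma commr_prod I (r : seq I) (F : I -> R) z :
  (forall j, j \in r -> GRing.comm z (F j)) -> GRing.comm z (\prod_(j <- r) F j).
Proof.
elim: r => [|a r IH] H; first by rewrite big_nil; exact: commr1.
rewrite big_cons; apply: commrM; first by apply: H; rewrite inE eqxx.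
by apply: IH => j jr; apply: H; rewrite inE jr orbT.
Qed.

Lemma prod_mul_pointwise I (r : seq I) (F G : I -> R) : uniq r ->
  (forall j j', j \in r -> j' \in r -> j != j' -> GRing.comm (F j') (G j)) ->
  \prod_(j <- r) F j * \prod_(j <- r) G j = \prod_(j <- r) (F j * G j).
Proof.
elim: r => [|a r IH] /=; first by rewrite !big_nil mulr1.
case/andP=> ar ur H; rewrite !big_cons -mulrA (mulrA (\prod_(j <- r) F j)).
have -> : \prod_(j <- r) F j * G a = G a * \prod_(j <- r) F j.
  apply/esym/commr_prod => j jr; apply: commr_sym; apply: H.
  - by rewrite inE eqxx.
  - by rewrite inE jr orbT.
  by apply/eqP=> e; move: ar; rewrite e jr.
rewrite -mulrA IH; first by rewrite mulrA.
  by [].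
by move=> j j' jr j'r; apply: H; rewrite inE ?jr ?j'r orbT.
Qed.

Lemma prod_sandwich I (r : seq I) (F : I -> R) (i : I) c d : uniq r -> i \in r ->
  (forall j, j \in r -> j != i -> GRing.comm c (F j) /\ GRing.comm (F j) d) ->
  c * \prod_(j <- r) F j * d = \prod_(j <- r) (if j == i then c * F j * d else F j).
Proof.
elim: r => [|a r IH] //= /andP[ar ur]; rewrite inE => ir H.
rewrite !big_cons; case: (eqVneq a i) => [ai|ai].
  subst a; rewrite -!mulrA; congr (_ * (_ * _)).
  have -> : \prod_(j <- r) F j * d = d * \prod_(j <- r) F j.
    apply/esym/commr_prod => j jr; apply: commr_sym.
    have jn : j != i by apply/eqP=> e; move: ar; rewrite -e jr.
    by case: (H j _ jn) => //; rewrite inE jr orbT.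
  congr (_ * _); apply: eq_big_seq => j jr.
  by case: eqP => // e; move: ar; rewrite -e jr.
have ir' : i \in r by move: ir; rewrite eq_sym (negbTE ai).
have [H1 H2] := H a (mem_head _ _) ai.
rewrite mulrA H1 -!mulrA; congr (_ * _); rewrite mulrA IH //.
by move=> j jr; apply: H; rewrite inE jr orbT.
Qed.

Lemma prod_sub_at I (r : seq I) (G : I -> R) (i : I) a b : uniq r -> i \in r ->
  \prod_(j <- r) (if j == i then a - b else G j) =
  \prod_(j <- r) (if j == i then a else G j) - \prod_(j <- r) (if j == i then b else G j).
Proof.
elim: r => [|c r IH] //= /andP[cr ur]; rewrite inE => ir; rewrite !big_cons.
case: (eqVneq c i) => [e|ne].
  subst c; have E z : \prod_(j <- r) (if j == i then z else G j) = \prod_(j <- r) G j.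
    by apply: eq_big_seq => j jr; case: eqP => // e; move: cr; rewrite -e jr.
  by rewrite !E mulrBl.
by rewrite IH ?mulrBr //; move: ir; rewrite eq_sym (negbTE ne).
Qed.

Lemma prod_eq0_at I (r : seq I) (F : I -> R) j : j \in r -> F j = 0 ->
  \prod_(i <- r) F i = 0.
Proof.
elim: r => [|a r IH] //; rewrite inE big_cons => /orP[/eqP <- -> | jr H].
  by rewrite mul0r.
by rewrite IH ?mulr0.
Qed.

Lemma prod_delta (I : finType) (i : I) (z : R) :
  \prod_(j : I) (if j == i then z else 1) = z.
Proof. by rewrite -big_mkcond big_pred1_eq. Qed.
End CommutingProducts.

Lemma prod_scale_at (R : pzRingType) (B : algType R) (I : eqType) (r : seq I)
    (F : I -> B) i0 c : uniq r -> i0 \in r ->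
  \prod_(j <- r) (if j == i0 then c *: F j else F j) = c *: \prod_(j <- r) F j.
Proof.
elim: r => [|a r IH] //= /andP[ar ur]; rewrite inE !big_cons => /orP[/eqP e|ir].
  subst a; rewrite eqxx -scalerAl; congr (_ *: (_ * _)).
  by apply: eq_big_seq => j jr; case: eqP => // e; move: ar; rewrite -e jr.
have -> : (a == i0) = false by apply/negbTE/eqP => e; move: ar; rewrite e ir.
by rewrite IH // scalerAr.
Qed.

Section IdealFacts.
Variable R : pzRingType.
Implicit Types (I P Q : R -> Prop).

Lemma ideal0 I : is_ideal I -> I 0. Proof. by case. Qed.

Lemma idealB I a b : is_ideal I -> I a -> I b -> I (a - b).
Proof. by case=> _ hD hN _ ha hb; apply: hD => //; apply: hN. Qed.

Lemma idealMl I r a : is_ideal I -> I a -> I (r * a).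
Proof. by case=> _ _ _ h ha; case: (h r a ha). Qed.

Lemma idealMr I r a : is_ideal I -> I a -> I (a * r).
Proof. by case=> _ _ _ h ha; case: (h r a ha). Qed.

Lemma ideal_sum I (T : Type) (r : seq T) (F : T -> R) :
  is_ideal I -> (forall t, I (F t)) -> I (\sum_(t <- r) F t).
Proof.
move=> hI hF; elim: r => [|t r IH]; first by rewrite big_nil; apply: ideal0.
by rewrite big_cons; case: hI => _ hD _ _; apply: hD.
Qed.

Lemma ideal_prod I (T : eqType) (r : seq T) (F : T -> R) j :
  is_ideal I -> j \in r -> I (F j) -> I (\prod_(i <- r) F i).
Proof.
move=> hI; elim: r => [|a r IH] //; rewrite inE big_cons => /orP[/eqP <- | jr] hF.
  exact: idealMr.
by apply: idealMl => //; apply: IH.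
Qed.

Lemma prime_ideal P : is_prime P -> is_ideal P. Proof. by case. Qed.

Lemma prime_eqid P Q : eqid P Q -> is_prime Q -> is_prime P.
Proof.
move=> e [[h0 hD hN hM] h1 hp]; split.
- split; first by apply/e.
  + by move=> a b /e ha /e hb; apply/e; apply: hD.
  + by move=> a /e ha; apply/e; apply: hN.
  by move=> r a /e ha; case: (hM r a ha) => ??; split; apply/e.
- by move/e.
move=> I J hI hJ H; case: (hp I J hI hJ) => [a b Ia Jb|hs|hs].
- by apply/e; apply: H.
- by left=> a /hs /e.
by right=> a /hs /e.
Qed.

Lemma not_prime_split P I J : ~ (subid I P \/ subid J P) ->
  exists a b, [/\ I a, ~ P a, J b & ~ P b].
Proof.
case/not_or_and=> nI nJ.
have [a Ha] := not_all_ex_not _ _ nI; have [b Hb] := not_all_ex_not _ _ nJ.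
have [Ia Pa] := imply_to_and _ _ Ha; have [Jb Pb] := imply_to_and _ _ Hb.
by exists a, b.
Qed.
End IdealFacts.

Lemma sum_group_by (V : nmodType) (T U : eqType) (s : seq T) (key : T -> U)
    (F : T -> V) :
  \sum_(p <- s) F p = \sum_(u <- undup (map key s)) \sum_(p <- s | key p == u) F p.
Proof.
under [RHS]eq_bigr do rewrite big_mkcond.
rewrite [RHS]exchange_big /=; apply: eq_big_seq => p ps.
have kp : key p \in undup (map key s) by rewrite mem_undup; apply: map_f.
rewrite (bigD1_seq (key p)) ?undup_uniq //= eqxx big1 ?addr0 // => u.
by rewrite eq_sym => /negbTE ->.
Qed.

Section Sn.
Variables (K : fieldType) (A : algType K) (n : nat) (x y : 'I_n -> A).
Hypothesis rels : Sn_relations x y.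
Hypothesis basis : smon_basis x y.

Local Notation gS := (gS x y).
Local Notation gF := (gF x y).

Lemma yx1 i : y i * x i = 1. Proof. exact: rels.1 i. Qed.

Lemma comm_gens i j : i != j -> [/\ GRing.comm (x i) (y j), GRing.comm (y i) (x j),
  GRing.comm (x i) (x j) & GRing.comm (y i) (y j)].
Proof.
move=> ij; have ji : j != i by rewrite eq_sym.
have [xy xx yy] := rels.2 i j ij; have [yx _ _] := rels.2 j i ji.
by split=> //; apply: commr_sym.
Qed.

Definition local (j : 'I_n) (a : A) : Prop :=
  forall z, GRing.comm z (x j) -> GRing.comm z (y j) -> GRing.comm z a.

Lemma local1 j : local j 1. Proof. by move=> z _ _; apply: commr1. Qed.

Lemma localM j a b : local j a -> local j b -> local j (a * b).
Proof. by move=> ha hb z h1 h2; apply: commrM; [apply: ha | apply: hb]. Qed.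

Lemma local_gS j k l : local j (gS j k l).
Proof. by move=> z h1 h2; apply: commrM; apply: commrX. Qed.

Lemma local_gF j k l : local j (gF j k l).
Proof. by move=> z h1 h2; apply: commrB; apply: local_gS. Qed.

Lemma local_comm_gens i j a : local j a -> i != j ->
  GRing.comm (x i) a /\ GRing.comm a (y i).
Proof.
move=> ha ij; have [xy yx xx yy] := comm_gens ij.
by split; last apply: commr_sym; apply: ha; rewrite // /GRing.comm.
Qed.

Lemma local_comm j j' a b : j != j' -> local j a -> local j' b -> GRing.comm a b.
Proof.
move=> jj' ha hb; have [xy yx xx yy] := comm_gens jj'.
by apply: hb; apply: commr_sym; apply: ha; apply: commr_sym.
Qed.

Lemma prod_mul_local (F G : 'I_n -> A) : (forall j, local j (F j)) ->
  (forall j, local j (G j)) ->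
  \prod_(j < n) F j * \prod_(j < n) G j = \prod_(j < n) (F j * G j).
Proof.
move=> hF hG; apply: prod_mul_pointwise; first exact: index_enum_uniq.
by move=> j j' _ _ jj'; apply: (local_comm (j := j')); rewrite // eq_sym.
Qed.

Lemma exprY_X i b k : y i ^+ b * x i ^+ k = x i ^+ (k - b) * y i ^+ (b - k).
Proof.
elim: b k => [|b IH] k; first by rewrite expr0 mul1r ?subn0 ?sub0n ?expr0 ?mulr1.
case: k => [|k]; first by rewrite expr0 mulr1 ?sub0n ?subn0 ?expr0 ?mul1r.
by rewrite exprSr exprS -mulrA (mulrA (y i)) yx1 mul1r IH !subSS.
Qed.

Lemma gS_mul j a b k l : gS j a b * gS j k l = gS j (a + (k - b)) ((b - k) + l).
Proof.
by rewrite /Defs.gS mulrA -(mulrA (x j ^+ a)) exprY_X mulrA -exprD -mulrA -exprD.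
Qed.

Lemma gS_shift j k l : x j * gS j k l * y j = gS j k.+1 l.+1.
Proof. by rewrite /Defs.gS exprS exprSr !mulrA. Qed.

(* e_j = gF j 0 0 = 1 - x_j y_j is an idempotent with e_j x_j = 0 = y_j e_j,
   hence e_j (x_j^a y_j^b) e_j is e_j if a = b = 0 and 0 otherwise. *)
Lemma gF00 j : gF j 0 0 = 1 - x j * y j.
Proof. by rewrite /Defs.gF /Defs.gS !expr0 !expr1 mulr1. Qed.

Lemma idem_sandwich j a b : gF j 0 0 * gS j a b * gF j 0 0 =
  if (a == 0%N) && (b == 0%N) then gF j 0 0 else 0.
Proof.
rewrite gF00 /Defs.gS; set e := 1 - x j * y j.
have ex : e * x j = 0 by rewrite /e mulrBl mul1r -mulrA yx1 mulr1 subrr.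
have ye : y j * e = 0 by rewrite /e mulrBr mulr1 mulrA yx1 mul1r subrr.
have ee : e * e = e by rewrite {2}/e mulrBr mulr1 mulrA ex mul0r subr0.
case: a => [|a] /=; last by rewrite exprS !mulrA ex !mul0r.
case: b => [|b] /=; first by rewrite !expr0 !mulr1 ee.
by rewrite expr0 mul1r exprSr -!mulrA ye !mulr0.
Qed.

Lemma idem_idem j : gF j 0 0 * gF j 0 0 = gF j 0 0.
Proof. by have := idem_sandwich j 0 0; rewrite /= /Defs.gS !expr0 !mulr1. Qed.

Lemma gF_factor j k l : gS j k 0 * gF j 0 0 * gS j 0 l = gF j k l.
Proof.
rewrite gF00 /Defs.gF /Defs.gS !expr0 !mulr1 !mul1r mulrBr mulr1 mulrBl.
by rewrite exprSr exprS !mulrA.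
Qed.

Definition expo := ({ffun 'I_n -> nat} * {ffun 'I_n -> nat})%type.
Definition mono (m : expo) : A := smon x y m.1 m.2.

Definition expo0 : expo := ([ffun=> 0%N], [ffun=> 0%N]).
Definition expo_mul (m m' : expo) : expo :=
  ([ffun j => m.1 j + (m'.1 j - m.2 j)], [ffun j => (m.2 j - m'.1 j) + m'.2 j])%N.
Definition expo_shift i (m : expo) : expo :=
  ([ffun j => m.1 j + (j == i)], [ffun j => m.2 j + (j == i)])%N.

Lemma expo_eq (k m : expo) : (forall j, k.1 j = m.1 j /\ k.2 j = m.2 j) -> k = m.
Proof.
case: k m => [k1 k2] [m1 m2] /= H; congr pair; apply/ffunP => j; by case: (H j).
Qed.

Lemma mono0 : mono expo0 = 1.
Proof. by rewrite /mono /smon big1 // => j _; rewrite /Defs.gS !ffunE !expr0 mulr1. Qed.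

Lemma mono_mul m m' : mono m * mono m' = mono (expo_mul m m').
Proof.
rewrite /mono /smon prod_mul_local; last 2 first.
- by move=> j; apply: local_gS.
- by move=> j; apply: local_gS.
by apply: eq_bigr => j _; rewrite gS_mul !ffunE.
Qed.

Lemma mono_shift i m : x i * mono m * y i = mono (expo_shift i m).
Proof.
rewrite /mono /smon (prod_sandwich (i := i)) ?index_enum_uniq ?mem_index_enum //; last first.
  move=> j _ ji; have ij : i != j by rewrite eq_sym.
  exact: local_comm_gens (@local_gS j _ _) ij.
apply: eq_bigr => j _; rewrite !ffunE.
by case: eqP => [->|_]; rewrite ?gS_shift ?addn1 ?addn0.
Qed.

Definition lin (s : seq (expo * K)) : A := \sum_(p <- s) p.2 *: mono p.1.
Definition weight (s : seq (expo * K)) (k : expo) : K := \sum_(p <- s | p.1 == k) p.2.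

Lemma sum_by_weight (V : lmodType K) s (f : expo -> V) :
  \sum_(p <- s) p.2 *: f p.1 = \sum_(k <- undup (map fst s)) weight s k *: f k.
Proof.
rewrite (sum_group_by _ fst); apply: eq_bigr => k _.
by rewrite scaler_suml; apply: eq_bigr => p /eqP ->.
Qed.

Lemma weight_eq0 s : lin s = 0 -> forall k, weight s k = 0.
Proof.
move=> s0 k; set u := undup (map fst s).
have [ku|kNu] := boolP (k \in u); last first.
  rewrite /weight big1_seq // => p /andP[/eqP pk ps]; case/negP: kNu.
  by rewrite mem_undup -pk; apply: map_f.
have uu : uniq u := undup_uniq _.
pose c (t : 'I_(size u)) := weight s (nth expo0 u t).
have inj : injective (fun t : 'I_(size u) => ((nth expo0 u t).1, (nth expo0 u t).2)).
  move=> t1 t2 /= [e1 e2]; apply: val_inj; apply/eqP.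
  rewrite -(nth_uniq expo0 (ltn_ord t1) (ltn_ord t2) uu).
  by apply/eqP; move: e1 e2; case: (nth _ u t1) (nth _ u t2) => ?? [??] /= -> ->.
have sum0 : \sum_(t < size u) c t *: smon x y (nth expo0 u t).1 (nth expo0 u t).2 = 0.
  rewrite -[RHS]s0 /lin sum_by_weight (big_nth expo0) big_mkord.
  by apply: eq_bigr => t _; rewrite /mono.
have kin : (index k u < size u)%N by rewrite index_mem.
by have := basis.2 _ _ _ _ inj sum0 (Ordinal kin); rewrite /c /= nth_index.
Qed.

(* Hence any assignment of values to monomials extends along combinations. *)
Lemma lin_eq0_ext (V : lmodType K) s (f : expo -> V) :
  lin s = 0 -> \sum_(p <- s) p.2 *: f p.1 = 0.
Proof.
move=> s0; rewrite sum_by_weight big1 // => k _.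
by rewrite weight_eq0 ?scale0r.
Qed.

Lemma lin_exists a : exists s, a == lin s.
Proof.
have [m [c [al [be ->]]]] := basis.1 a.
exists [seq ((al t, be t), c t) | t <- enum 'I_m]; apply/eqP.
by rewrite /lin big_map big_enum.
Qed.

Definition rep (a : A) : seq (expo * K) := xchoose (lin_exists a).

Lemma repP a : a = lin (rep a).
Proof. by apply/eqP; exact: (xchooseP (lin_exists a)). Qed.

Lemma lin_cat s s' : lin (s ++ s') = lin s + lin s'.
Proof. by rewrite /lin big_cat. Qed.

Definition scale_lin c (s : seq (expo * K)) := [seq (p.1, c * p.2) | p <- s].

Lemma lin_scale c s : lin (scale_lin c s) = c *: lin s.
Proof. by rewrite /lin big_map scaler_sumr; apply: eq_bigr => p _; rewrite scalerA. Qed.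

Definition extend (V : lmodType K) (f : expo -> V) (a : A) : V :=
  \sum_(p <- rep a) p.2 *: f p.1.

Lemma extend_lin (V : lmodType K) (f : expo -> V) s :
  extend f (lin s) = \sum_(p <- s) p.2 *: f p.1.
Proof.
rewrite /extend; have := lin_eq0_ext f (s := rep (lin s) ++ scale_lin (-1) s).
rewrite lin_cat lin_scale -repP scaleN1r subrr => /(_ erefl).
rewrite big_cat big_map /= => /eqP; rewrite addr_eq0 => /eqP ->.
by rewrite -sumrN; apply: eq_bigr => p _; rewrite mulN1r scaleNr opprK.
Qed.

Lemma extend_mono (V : lmodType K) (f : expo -> V) m : extend f (mono m) = f m.
Proof.
have -> : mono m = lin [:: (m, 1)] by rewrite /lin big_seq1 scale1r.
by rewrite extend_lin big_seq1 scale1r.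
Qed.

Definition islin (V : lmodType K) (L : A -> V) :=
  (forall a b, L (a + b) = L a + L b) /\ (forall c a, L (c *: a) = c *: L a).

Lemma islin_extend (V : lmodType K) (f : expo -> V) : islin (extend f).
Proof.
split=> [a b|c a].
  by rewrite {1}(repP a) {1}(repP b) -lin_cat extend_lin big_cat.
rewrite {1}(repP a) -lin_scale extend_lin big_map scaler_sumr.
by apply: eq_bigr => p _; rewrite scalerA.
Qed.

Section LinearMaps.
Variables (V : lmodType K) (L : A -> V).
Hypothesis L_lin : islin L.

Lemma islin0 : L 0 = 0.
Proof. by apply: (addrI (L 0)); rewrite -L_lin.1 !addr0. Qed.

Lemma islinN a : L (- a) = - L a.
Proof. by rewrite -[- a]scaleN1r L_lin.2 scaleN1r. Qed.

Lemma islinB a b : L (a - b) = L a - L b.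
Proof. by rewrite L_lin.1 islinN. Qed.

Lemma islin_sum (I : Type) (s : seq I) (P : pred I) (F : I -> A) :
  L (\sum_(t <- s | P t) F t) = \sum_(t <- s | P t) L (F t).
Proof. exact: (big_morph L L_lin.1 islin0). Qed.

Lemma islin_lin s : L (lin s) = \sum_(p <- s) p.2 *: L (mono p.1).
Proof. by rewrite islin_sum; apply: eq_bigr => p _; rewrite L_lin.2. Qed.
End LinearMaps.

Lemma islin_eq (V : lmodType K) (L L' : A -> V) : islin L -> islin L' ->
  (forall m, L (mono m) = L' (mono m)) -> forall a, L a = L' a.
Proof.
move=> L_lin L'_lin H a; rewrite (repP a) (islin_lin L_lin) (islin_lin L'_lin).
by apply: eq_bigr => p _; rewrite H.
Qed.

Lemma islin_sandwich u v : islin (fun a : A => u * a * v).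
Proof. by split=> [a b|c a]; rewrite ?mulrDr ?mulrDl // -scalerAr -scalerAl. Qed.

Lemma islin_mull u : islin (fun a : A => u * a).
Proof. by split=> *; rewrite ?mulrDr ?scalerAr. Qed.

Lemma islin_mulr v : islin (fun a : A => a * v).
Proof. by split=> *; rewrite ?mulrDl ?scalerAl. Qed.

Lemma islin_comp (V : lmodType K) (L1 : A -> V) (L2 : A -> A) :
  islin L1 -> islin L2 -> islin (fun a => L1 (L2 a)).
Proof. by move=> [h1 h2] [h3 h4]; split=> *; rewrite ?h3 ?h1 ?h4 ?h2. Qed.

Lemma islin_sub (L1 L2 : A -> A) : islin L1 -> islin L2 -> islin (fun a => L1 a - L2 a).
Proof.
move=> [h1 h2] [h3 h4]; split=> *; rewrite ?h1 ?h3 ?h2 ?h4; first by rewrite opprD addrACA.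
by rewrite scalerBr.
Qed.

Definition mcoef (a : A) (m : expo) : K := @extend K^o (fun m' => ((m' == m)%:R : K^o)) a.

Lemma islin_mcoef m : @islin K^o (mcoef^~ m). Proof. exact: islin_extend. Qed.

Lemma mcoefZ c a m : mcoef (c *: a) m = c * mcoef a m.
Proof. exact: (islin_mcoef m).2. Qed.

Lemma mcoef0 m : mcoef 0 m = 0. Proof. exact: (islin0 (islin_mcoef m)). Qed.

Lemma mcoef_mono m m' : mcoef (mono m) m' = (m == m')%:R.
Proof. by rewrite /mcoef extend_mono. Qed.

Lemma mcoef_lin s m : mcoef (lin s) m = weight s m.
Proof.
rewrite /mcoef extend_lin /weight [RHS]big_mkcond; apply: eq_bigr => p _.
by case: eqP => _; rewrite /GRing.scale /= ?mulr1 ?mulr0.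
Qed.

Lemma mcoef_lin_supp s m : mcoef (lin s) m != 0 -> m \in map fst s.
Proof.
rewrite mcoef_lin; apply: contraR => H; rewrite /weight big1_seq // => p /andP[/eqP e ps].
by case/negP: H; rewrite -e; apply: map_f.
Qed.

Definition supp (a : A) : seq expo := undup (map fst (rep a)).

Lemma supp_uniq a : uniq (supp a). Proof. exact: undup_uniq. Qed.

Lemma mcoef_supp a m : mcoef a m != 0 -> m \in supp a.
Proof. by rewrite /supp mem_undup {1}(repP a); apply: mcoef_lin_supp. Qed.

Lemma islin_expand (V : lmodType K) (L : A -> V) a : islin L ->
  L a = \sum_(m <- supp a) mcoef a m *: L (mono m).
Proof.
move=> L_lin; rewrite {1}(repP a) (islin_lin L_lin) (sum_by_weight _ (fun m => L (mono m))).
by apply: eq_bigr => k _; rewrite -mcoef_lin -repP.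
Qed.

Lemma mcoef_eq0 a : (forall m, mcoef a m = 0) -> a = 0.
Proof.
move=> H; have id_lin : islin (fun b : A => b) by [].
by have /= -> := islin_expand a id_lin; rewrite big1 // => k _; rewrite H scale0r.
Qed.

Lemma nz_mcoef a : a != 0 -> exists m, mcoef a m != 0.
Proof.
move=> /eqP an; apply: NNPP => none; apply: an; apply: mcoef_eq0 => m.
by apply/eqP; apply: contraT => hm; case: none; exists m.
Qed.

Lemma one_neq0 : (1 : A) != 0.
Proof.
apply/eqP => h; have := mcoef_mono expo0 expo0; rewrite eqxx mono0 h mcoef0.
by move/eqP; rewrite eq_sym oner_eq0.
Qed.

Ltac expo_arith :=
  apply: expo_eq => ? /=; rewrite ?ffunE /=;
  repeat (case: eqP => /= [?|?]; subst); try congruence; split; lia.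

Definition delta (i : 'I_n) (a : A) : A := a - x i * a * y i.
Definition delta_seq (r : seq 'I_n) (a : A) : A := foldr delta a r.

Lemma islin_delta i : islin (delta i).
Proof. by apply: islin_sub; [split | apply: islin_sandwich]. Qed.

Lemma islin_delta_seq r : islin (delta_seq r).
Proof. by elim: r => [|i r IH] /=; [split | apply: islin_comp; [apply: islin_delta|]]. Qed.

Lemma delta_mono i m : delta i (mono m) = mono m - mono (expo_shift i m).
Proof. by rewrite /delta mono_shift. Qed.

Lemma delta_gS i k l : delta i (gS i k l) = gF i k l.
Proof. by rewrite /delta gS_shift. Qed.

Lemma delta_prod (G : 'I_n -> A) i : (forall j, local j (G j)) ->
  delta i (\prod_(j < n) G j) = \prod_(j < n) (if j == i then delta i (G j) else G j).
Proof.
move=> HG; rewrite /delta (prod_sandwich (i := i)) ?index_enum_uniq ?mem_index_enum //;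
  last by move=> j _ ji; apply: local_comm_gens; rewrite // eq_sym.
have at_i z : \prod_(j < n) (if j == i then z j else G j) =
              \prod_(j < n) (if j == i then z i else G j).
  by apply: eq_bigr => j _; case: eqP => // ->.
rewrite (at_i (fun j => G j - x i * G j * y i)) prod_sub_at ?index_enum_uniq //.
rewrite -(at_i (fun j => x i * G j * y i)); congr (_ - _).
by apply: eq_bigr => j _; case: eqP => // ->.
Qed.

Lemma delta_seq_mono (r : seq 'I_n) (k l : {ffun 'I_n -> nat}) : uniq r ->
  delta_seq r (mono (k, l)) =
  \prod_(j < n) (if j \in r then gF j (k j) (l j) else gS j (k j) (l j)).
Proof.
elim: r => [|i r IH] //= /andP[ir ur]; rewrite IH // delta_prod; last first.
  by move=> j; case: (j \in r); [apply: local_gF | apply: local_gS].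
apply: eq_bigr => j _; rewrite inE; case: eqP => [->|//].
by rewrite (negbTE ir) delta_gS.
Qed.

Definition dimage (r : seq 'I_n) (a : A) : Prop := exists b, a = delta_seq r b.

Lemma dimage_sum (r : seq 'I_n) (I : Type) (s : seq I) (F : I -> A) :
  (forall t, dimage r (F t)) -> dimage r (\sum_(t <- s) F t).
Proof.
move=> H; elim: s => [|t s [b IH]].
  by exists 0; rewrite big_nil (islin0 (islin_delta_seq r)).
rewrite big_cons IH; have [b' ->] := H t; exists (b' + b).
by rewrite (islin_delta_seq r).1.
Qed.

Lemma dimageZ r c a : dimage r a -> dimage r (c *: a).
Proof. by case=> b ->; exists (c *: b); rewrite (islin_delta_seq r).2. Qed.

Lemma dimage_lin r (L : A -> A) : islin L -> (forall m, dimage r (L (mono m))) ->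
  forall b, dimage r (L b).
Proof.
move=> L_lin H b; rewrite (repP b) (islin_lin L_lin); apply: dimage_sum => p.
exact: dimageZ.
Qed.

Lemma span_dimage (r : seq 'I_n) (d : 'I_n -> bool) :
  uniq r -> (forall j, d j = (j \in r)) ->
  forall a, (exists m (c : 'I_m -> K) (k l : 'I_m -> 'I_n -> nat),
    a = \sum_(t < m) c t *: \prod_(j < n)
          (if d j then gF j (k t j) (l t j) else gS j (k t j) (l t j)))
  <-> dimage r a.
Proof.
move=> ur hd a; split.
  case=> m [c [k [l ->]]]; apply: dimage_sum => t; apply: dimageZ.
  exists (mono ([ffun j => k t j], [ffun j => l t j])); rewrite delta_seq_mono //.
  by apply: eq_bigr => j _; rewrite hd !ffunE.
case=> b ->; rewrite (repP b) (islin_lin (islin_delta_seq r)).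
pose p t := nth (expo0, 0) (rep b) t.
exists (size (rep b)), (fun t => (p t).2), (fun t j => (p t).1.1 j), (fun t j => (p t).1.2 j).
rewrite (big_nth (expo0, 0)) big_mkord; apply: eq_bigr => t _.
rewrite -/(p t); case: (p t) => [[k l] c] /=; rewrite delta_seq_mono //.
by congr (_ *: _); apply: eq_bigr => j _; rewrite hd.
Qed.

Lemma pidE i a : pid x y i a <-> dimage [:: i] a.
Proof. by apply: span_dimage => // j; rewrite inE. Qed.

Lemma FtensE a : Ftens x y a <-> dimage (index_enum 'I_n) a.
Proof.
exact: (@span_dimage (index_enum 'I_n) (fun _ => true) (index_enum_uniq _)
  (fun j => esym (mem_index_enum j)) a).
Qed.

Lemma gF_pid i k l : dimage [:: i] (gF i k l).
Proof. by exists (gS i k l); rewrite /= delta_gS. Qed.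

(* Multiplying by a monomial only shifts exponents, in a way compatible with
   the shifts of Delta_i (or kills the Delta_i-difference). *)
Lemma expo_mul_shiftr i m m' : expo_mul m (expo_shift i m') =
  if (m.2 i <= m'.1 i)%N then expo_shift i (expo_mul m m') else expo_mul m m'.
Proof. by case: leqP => h; expo_arith. Qed.

Lemma expo_mul_shiftl i m m' : expo_mul (expo_shift i m') m =
  if (m.1 i <= m'.2 i)%N then expo_shift i (expo_mul m' m) else expo_mul m' m.
Proof. by case: leqP => h; expo_arith. Qed.

Lemma delta_mull i m b : dimage [:: i] (mono m * delta i b).
Proof.
apply: (dimage_lin (L := fun b => mono m * delta i b)) => [|m'].
  exact: islin_comp (islin_mull _) (islin_delta i).
rewrite delta_mono mulrBr !mono_mul expo_mul_shiftr; case: leqP => _.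
  by exists (mono (expo_mul m m')); rewrite /= delta_mono.
by exists 0; rewrite subrr /= /delta mulr0 mul0r subrr.
Qed.

Lemma delta_mulr i m b : dimage [:: i] (delta i b * mono m).
Proof.
apply: (dimage_lin (L := fun b => delta i b * mono m)) => [|m'].
  exact: islin_comp (islin_mulr _) (islin_delta i).
rewrite delta_mono mulrBl !mono_mul expo_mul_shiftl; case: leqP => _.
  by exists (mono (expo_mul m' m)); rewrite /= delta_mono.
by exists 0; rewrite subrr /= /delta mulr0 mul0r subrr.
Qed.

Lemma pid_ideal i : is_ideal (dimage [:: i]).
Proof.
split.
- by exists 0; rewrite /= /delta mulr0 mul0r subrr.
- by move=> a b [a' ->] [b' ->]; exists (a' + b'); rewrite /= (islin_delta i).1.
- by move=> a [a' ->]; exists (- a'); rewrite /= (islinN (islin_delta i)).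
move=> c a [b ->]; split.
  exact: (dimage_lin (islin_mulr _) (fun m => delta_mull i m b)).
exact: (dimage_lin (islin_mull _) (fun m => delta_mulr i m b)).
Qed.

(* Reduction at i: x_i^k y_i^l ~> x_i^(k-min) y_i^(l-min), and the diagonal ray
   from the reduced exponent (t = 0) to m itself (t = min(k, l)). *)
Definition expo_min i (m : expo) : nat := minn (m.1 i) (m.2 i).
Definition expo_ray i (m : expo) (t : nat) : expo :=
  ([ffun j => if j == i then m.1 i - expo_min i m + t else m.1 j],
   [ffun j => if j == i then m.2 i - expo_min i m + t else m.2 j])%N.
Definition expo_red i (m : expo) : expo := expo_ray i m 0.

Lemma expo_ray_shift i m t : expo_shift i (expo_ray i m t) = expo_ray i m t.+1.
Proof. by rewrite /expo_ray /expo_min; expo_arith. Qed.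

Lemma expo_ray_min i m : expo_ray i m (expo_min i m) = m.
Proof. by rewrite /expo_ray /expo_min; expo_arith. Qed.

Lemma expo_red_shift i m : expo_red i (expo_shift i m) = expo_red i m.
Proof. by rewrite /expo_red /expo_ray /expo_min; expo_arith. Qed.

Lemma expo_red_shift_comm i j m : i != j ->
  expo_red i (expo_shift j m) = expo_shift j (expo_red i m).
Proof. by move=> /eqP ij; rewrite /expo_red /expo_ray /expo_min; expo_arith. Qed.

Lemma expo_red_ray_comm i j m t : i != j ->
  expo_red j (expo_ray i m t) = expo_ray i (expo_red j m) t.
Proof. by move=> /eqP ij; rewrite /expo_red /expo_ray /expo_min; expo_arith. Qed.

Lemma expo_min_red i j m : i != j -> expo_min i (expo_red j m) = expo_min i m.
Proof. by move=> ij; rewrite /expo_min /expo_red /expo_ray !ffunE (negbTE ij). Qed.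

Lemma expo_red0 i : expo_red i expo0 = expo0.
Proof. by rewrite /expo_red /expo_ray /expo_min; expo_arith. Qed.

(* proj i sends mono m to its reduction at i; proj_lift i provides the
   Delta_i-preimage of a - proj i a (a telescoping sum along the ray). *)
Definition proj i : A -> A := extend (fun m => mono (expo_red i m)).
Definition proj_lift i : A -> A :=
  extend (fun m => - \sum_(t < expo_min i m) mono (expo_ray i m t)).

Lemma islin_proj i : islin (proj i). Proof. exact: islin_extend. Qed.
Lemma islin_proj_lift i : islin (proj_lift i). Proof. exact: islin_extend. Qed.

Lemma proj_mono i m : proj i (mono m) = mono (expo_red i m).
Proof. exact: extend_mono. Qed.

Lemma proj_lift_mono i m :
  proj_lift i (mono m) = - \sum_(t < expo_min i m) mono (expo_ray i m t).
Proof. exact: extend_mono. Qed.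

Lemma proj_one i : proj i 1 = 1.
Proof. by rewrite -mono0 proj_mono expo_red0. Qed.

Lemma proj_delta i b : proj i (delta i b) = 0.
Proof.
apply: (@islin_eq _ (fun b => proj i (delta i b)) (fun _ => 0)) => [||m].
- exact: (islin_comp (islin_proj i) (islin_delta i)).
- by split=> *; rewrite ?addr0 ?scaler0.
by rewrite delta_mono (islinB (islin_proj i)) !proj_mono expo_red_shift subrr.
Qed.

Lemma proj_decomp i a : a - proj i a = delta i (proj_lift i a).
Proof.
apply: (@islin_eq _ (fun a => a - proj i a) (fun a => delta i (proj_lift i a))) => [||m].
- by apply: islin_sub => //; apply: islin_proj.
- exact: (islin_comp (islin_delta i) (islin_proj_lift i)).
rewrite proj_mono proj_lift_mono (islinN (islin_delta i)) (islin_sum (islin_delta i)).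
under eq_bigr do rewrite delta_mono expo_ray_shift.
rewrite -sumrN; under eq_bigr do rewrite opprB.
rewrite -(big_mkord xpredT (fun t => mono (expo_ray i m t.+1) - mono (expo_ray i m t))).
by rewrite telescope_sumr // expo_ray_min.
Qed.

Lemma pid_proj i a : dimage [:: i] a <-> proj i a = 0.
Proof.
split; first by case=> b ->; apply: proj_delta.
by move=> h; exists (proj_lift i a); rewrite /= -proj_decomp h subr0.
Qed.

Lemma proj_lift_comm i j a : i != j -> proj j (proj_lift i a) = proj_lift i (proj j a).
Proof.
move=> ij; apply: (@islin_eq _ (fun a => proj j (proj_lift i a))
  (fun a => proj_lift i (proj j a))) => [||m].
- exact: (islin_comp (islin_proj j) (islin_proj_lift i)).
- exact: (islin_comp (islin_proj_lift i) (islin_proj j)).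
rewrite proj_lift_mono proj_mono proj_lift_mono (islinN (islin_proj j)).
rewrite (islin_sum (islin_proj j)) expo_min_red //.
by congr (- _); apply: eq_bigr => t _; rewrite proj_mono expo_red_ray_comm.
Qed.

Lemma proj_delta_comm i j z : i != j -> proj i (delta j z) = delta j (proj i z).
Proof.
move=> ij; apply: (@islin_eq _ (fun z => proj i (delta j z)) (fun z => delta j (proj i z)))
  => [||m].
- exact: (islin_comp (islin_proj i) (islin_delta j)).
- exact: (islin_comp (islin_delta j) (islin_proj i)).
by rewrite delta_mono (islinB (islin_proj i)) !proj_mono delta_mono expo_red_shift_comm.
Qed.

Lemma dimage_inter (r : seq 'I_n) a : uniq r ->
  (forall j, j \in r -> dimage [:: j] a) -> dimage r a.
Proof.
elim: r a => [|i r IH] a; first by move=> _ _; exists a.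
case/andP=> ir ur H.
have pa : proj i a = 0 by apply/pid_proj; apply: H; rewrite inE eqxx.
have [b eb] : dimage r (proj_lift i a).
  apply: IH => // j jr; apply/pid_proj.
  have ij : i != j by apply/eqP=> e; move: ir; rewrite e jr.
  rewrite proj_lift_comm //; have /pid_proj -> : dimage [:: j] a.
    by apply: H; rewrite inE jr orbT.
  exact: islin0 (islin_proj_lift i).
by exists b; rewrite /= -eb -proj_decomp pa subr0.
Qed.

Lemma delta_ideal (I : A -> Prop) i a : is_ideal I -> I a -> I (delta i a).
Proof. by move=> hI ha; apply: idealB => //; apply: idealMr => //; apply: idealMl. Qed.

Lemma dimage_sub_pid (r : seq 'I_n) a : dimage r a -> forall j, j \in r -> dimage [:: j] a.
Proof.
elim: r a => [|i r IH] a [b ->] j //; rewrite inE => /orP[/eqP ->|jr].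
  by exists (delta_seq r b).
by apply: delta_ideal; [exact: pid_ideal | apply: IH => //; exists b].
Qed.

Lemma dimageP (r : seq 'I_n) a : uniq r ->
  dimage r a <-> (forall j, j \in r -> dimage [:: j] a).
Proof. by move=> ur; split; [exact: dimage_sub_pid | exact: dimage_inter]. Qed.

Lemma dimage_ideal r : uniq r -> is_ideal (dimage r).
Proof.
move=> /dimageP E; split.
- by apply/E => j _; apply: ideal0; apply: pid_ideal.
- move=> a b /E ha /E hb; apply/E => j jr; case: (pid_ideal j) => _ hD _ _.
  by apply: hD; [apply: ha | apply: hb].
- move=> a /E ha; apply/E => j jr; case: (pid_ideal j) => _ _ hN _; exact: hN (ha j jr).
move=> c a /E ha; split; apply/E => j jr.
  by apply: idealMl; [apply: pid_ideal | apply: ha].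
by apply: idealMr; [apply: pid_ideal | apply: ha].
Qed.

(* For S a set of indices, p, q
   exponent vectors and N a bound, the elements
     left_sw S p   = prod_(j in S) e_j y_j^(p_j),
     right_sw S q N = prod_(j in S) x_j^(q_j) e_j * prod_(j notin S) x_j^N
   kill mono m unless the S-part of m lies on the diagonal of (p, q), below p;
   then the S-part becomes prod_(j in S) e_j. *)
Definition sw_ok (k l p q : nat) : bool := (k <= p)%N && (l + p == q + k)%N.
Definition sw_cond (S : pred 'I_n) (p q : 'I_n -> nat) (m : expo) : bool :=
  [forall j, S j ==> sw_ok (m.1 j) (m.2 j) (p j) (q j)].

Definition left_sw (S : pred 'I_n) (p : 'I_n -> nat) : A :=
  \prod_(j < n) (if S j then gF j 0 0 * gS j 0 (p j) else 1).
Definition right_sw (S : pred 'I_n) (q : 'I_n -> nat) (N : nat) : A :=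
  \prod_(j < n) (if S j then gS j (q j) 0 * gF j 0 0 else gS j N 0).
Definition sw_val (S : pred 'I_n) (N : nat) (m : expo) : A :=
  \prod_(j < n) (if S j then gF j 0 0 else gS j (m.1 j + (N - m.2 j)) (m.2 j - N)).

Lemma idem_sandwich_gS j k l p q :
  gF j 0 0 * gS j 0 p * gS j k l * (gS j q 0 * gF j 0 0) =
  if sw_ok k l p q then gF j 0 0 else 0.
Proof.
have assoc (e s1 s2 s3 : A) : e * s1 * s2 * (s3 * e) = e * (s1 * s2 * s3) * e.
  by rewrite !mulrA.
rewrite assoc !gS_mul idem_sandwich.
congr (if _ then _ else _); rewrite /sw_ok.
by apply/idP/idP => /andP[h1 h2]; apply/andP; split; lia.
Qed.

Lemma sandwich_mono S p q N m :
  left_sw S p * mono m * right_sw S q N = if sw_cond S p q m then sw_val S N m else 0.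
Proof.
have loc_l j : local j (if S j then gF j 0 0 * gS j 0 (p j) else 1).
  by case: (S j); [apply: localM; [apply: local_gF | apply: local_gS] | apply: local1].
have loc_r j : local j (if S j then gS j (q j) 0 * gF j 0 0 else gS j N 0).
  by case: (S j); [apply: localM; [apply: local_gS | apply: local_gF] | apply: local_gS].
rewrite /left_sw /mono /smon prod_mul_local //; last by move=> j; apply: local_gS.
rewrite /right_sw prod_mul_local //; last by move=> j; apply: localM => //; apply: local_gS.
have factor j : (if S j then gF j 0 0 * gS j 0 (p j) else 1) * gS j (m.1 j) (m.2 j) *
    (if S j then gS j (q j) 0 * gF j 0 0 else gS j N 0) =
  if S j then (if sw_ok (m.1 j) (m.2 j) (p j) (q j) then gF j 0 0 else 0)
  else gS j (m.1 j + (N - m.2 j)) (m.2 j - N).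
  by case: (S j); rewrite ?idem_sandwich_gS // mul1r gS_mul addn0.
under eq_bigr do rewrite factor.
case: (boolP (sw_cond S p q m)) => hc.
  apply: eq_bigr => j _; case hS: (S j) => //.
  by move/forallP: hc => /(_ j); rewrite hS /= => ->.
move/forallPn: hc => [j]; rewrite negb_imply => /andP[hS hn].
by apply: (prod_eq0_at (j := j)); rewrite ?mem_index_enum // hS (negbTE hn).
Qed.

Lemma sw_cond_refl S (m : expo) : sw_cond S m.1 m.2 m.
Proof. by apply/forallP => j; apply/implyP => _; rewrite /sw_ok leqnn addnC eqxx. Qed.

(* Minimal monomials: among the monomials of a on a fixed diagonal, one whose
   S-part has minimal total degree admits no other monomial of a below it on
   that diagonal. *)
Definition sum_on (S : pred 'I_n) (k : expo) : nat := (\sum_(j < n | S j) k.1 j)%N.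
Definition same_diag (S : pred 'I_n) (k m : expo) : bool :=
  [forall j, S j ==> (k.2 j + m.1 j == m.2 j + k.1 j)%N].

Lemma sum_on_le_eq (S : pred 'I_n) (f g : 'I_n -> nat) :
  (forall j, S j -> f j <= g j)%N ->
  (\sum_(j < n | S j) g j <= \sum_(j < n | S j) f j)%N -> forall j, S j -> f j = g j.
Proof.
move=> hle hs j0 Sj0; apply/eqP; rewrite eqn_leq hle //= leqNgt; apply/negP => hlt.
move: hs; rewrite (bigD1 j0) //= [X in (_ <= X)%N](bigD1 j0) //=.
have : (\sum_(j < n | S j && (j != j0)) f j <= \sum_(j < n | S j && (j != j0)) g j)%N.
  by apply: leq_sum => j /andP[Sj _]; apply: hle.
move: hlt; set a := \sum_(j < n | _) f j; set b := \sum_(j < n | _) g j.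
by lia.
Qed.

Lemma minimal_mono S a m0 : mcoef a m0 != 0 -> exists ms : expo, mcoef a ms != 0 /\
  (forall k, mcoef a k != 0 -> sw_cond S ms.1 ms.2 k ->
     forall j, S j -> k.1 j = ms.1 j /\ k.2 j = ms.2 j).
Proof.
move=> h0.
pose P N := has (fun k => [&& same_diag S k m0, mcoef a k != 0 & sum_on S k == N]) (supp a).
have exP : exists N, P N.
  exists (sum_on S m0); apply/hasP; exists m0; first exact: mcoef_supp.
  apply/and3P; split => //; apply/forallP => j; apply/implyP => _; by rewrite addnC.
case: (ex_minnP exP) => N /hasP [ms msin /and3P [dms cms /eqP sms]] hmin.
exists ms; split => // k ck condk.
have cond_j j : S j -> (k.1 j <= ms.1 j)%N /\ (k.2 j + ms.1 j == ms.2 j + k.1 j)%N.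
  move=> Sj; move/forallP: condk => /(_ j); rewrite Sj /= => /andP[h1 /eqP h2].
  by split => //; apply/eqP; lia.
have dk : same_diag S k m0.
  apply/forallP => j; apply/implyP => Sj; have [_ /eqP h2] := cond_j j Sj.
  move/forallP: dms => /(_ j); rewrite Sj /= => /eqP h1; apply/eqP; move: h1 h2.
  by move: (k.1 j) (k.2 j) (ms.1 j) (ms.2 j) (m0.1 j) (m0.2 j) => *; lia.
have le1 : (sum_on S ms <= sum_on S k)%N.
  by rewrite sms; apply: hmin; apply/hasP; exists k; rewrite ?dk ?ck ?eqxx ?mcoef_supp.
have E := @sum_on_le_eq S (fun j => k.1 j) (fun j => ms.1 j) (fun j Sj => (cond_j j Sj).1) le1.
move=> j Sj; have /= e1 := E j Sj; split => //.
have [_ /eqP] := cond_j j Sj; move: e1.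
by move: (k.1 j) (k.2 j) (ms.1 j) (ms.2 j) => *; lia.
Qed.

Definition Eall : A := \prod_(j < n) gF j 0 0.

Lemma Eall_idem : Eall * Eall = Eall.
Proof.
rewrite /Eall prod_mul_local; [|by move=> j; apply: local_gF|by move=> j; apply: local_gF].
by apply: eq_bigr => j _; rewrite idem_idem.
Qed.

Lemma Eall_dimage : Eall = delta_seq (index_enum 'I_n) (mono expo0).
Proof.
rewrite delta_seq_mono ?index_enum_uniq //.
by apply: eq_bigr => j _; rewrite mem_index_enum !ffunE.
Qed.

Lemma mcoef_delta_seq r z (m : expo) : (forall j, j \in r -> m.1 j = 0%N) ->
  mcoef (delta_seq r z) m = mcoef z m.
Proof.
elim: r => [|j r IH] //= H; rewrite -[RHS]IH; last first.
  by move=> k kr; apply: H; rewrite inE kr orbT.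
have mj : m.1 j = 0%N by apply: H; rewrite inE eqxx.
rewrite /delta (islinB (islin_mcoef m)); set w := delta_seq r z.
suff -> : mcoef (x j * w * y j) m = 0 by rewrite subr0.
apply: (@islin_eq K^o (fun w => mcoef (x j * w * y j) m) (fun _ => 0)) => [||m'].
- exact: islin_comp (islin_mcoef m) (islin_sandwich _ _).
- by split=> *; rewrite ?addr0 ?scaler0.
rewrite mono_shift mcoef_mono; case: eqP => // e.
by move: mj; rewrite -e /expo_shift !ffunE eqxx addn1.
Qed.

Lemma Eall_neq0 : Eall != 0.
Proof.
have c1 : mcoef Eall expo0 = 1.
  by rewrite Eall_dimage mcoef_delta_seq ?mcoef_mono ?eqxx // => j _; rewrite ffunE.
by apply/eqP => h; move: c1; rewrite h mcoef0 => /eqP; rewrite eq_sym oner_eq0.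
Qed.

Lemma idealZ (I : A -> Prop) c z : is_ideal I -> I z -> I (c *: z).
Proof. by move=> hI hz; rewrite -[z]mul1r scalerAl; apply: idealMl. Qed.

Lemma ideal_Eall (I : A -> Prop) a : is_ideal I -> I a -> a != 0 -> I Eall.
Proof.
move=> hI ha an; have [m0 hm0] := nz_mcoef an.
have [ms [cms hms]] := minimal_mono predT hm0.
have H : left_sw predT ms.1 * a * right_sw predT ms.2 0 = mcoef a ms *: Eall.
  rewrite (islin_expand a (islin_sandwich _ _)).
  under eq_bigr do rewrite sandwich_mono.
  rewrite (bigD1_seq ms) ?supp_uniq ?mcoef_supp //= sw_cond_refl big1 ?addr0.
    by congr (_ *: _); apply: eq_bigr.
  move=> k kms; case: (eqVneq (mcoef a k) 0) => [->|ck]; first by rewrite scale0r.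
  case: ifP => [cd|_]; last by rewrite scaler0.
  by case/eqP: kms; apply: expo_eq => j; apply: hms.
have : I (mcoef a ms *: Eall) by rewrite -H; apply: idealMr => //; apply: idealMl.
by move/(idealZ (mcoef a ms)^-1 hI); rewrite scalerA mulVf ?scale1r.
Qed.

Lemma Ftens_ideal (I : A -> Prop) : is_ideal I -> I Eall -> forall z, Ftens x y z -> I z.
Proof.
move=> hI hE z [m [c [k [l ->]]]]; apply: ideal_sum => // t; apply: idealZ => //.
have -> : \prod_(j < n) gF j (k t j) (l t j) =
   (\prod_(j < n) gS j (k t j) 0) * Eall * (\prod_(j < n) gS j 0 (l t j)).
  rewrite /Eall prod_mul_local; [|by move=> j; apply: local_gS|by move=> j; apply: local_gF].
  rewrite prod_mul_local; [|by move=> j; apply: localM; [apply: local_gS|apply: local_gF]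
    |by move=> j; apply: local_gS].
  by apply: eq_bigr => j _; rewrite gF_factor.
by apply: idealMr => //; apply: idealMl.
Qed.

(* The elements E'_i R(x_i), with E'_i = prod_(j != i) e_j and R a polynomial,
   are fixed by proj i and vanish only for R = 0; hence none of them lies in p_i
   unless R = 0. *)
Definition expo_x i e : expo := ([ffun j => if j == i then e else 0%N], [ffun=> 0%N]).
Definition Eexc i : A := \prod_(j < n) (if j != i then gF j 0 0 else 1).
Definition others i : seq 'I_n := [seq j <- index_enum 'I_n | j != i].

Lemma local_Eexc_factor i j : local j (if j != i then gF j 0 0 else 1).
Proof. by case: (j != i); [apply: local_gF | apply: local1]. Qed.

Lemma Eexc_gS i d d' :
  Eexc i * gS i d d' = \prod_(j < n) (if j != i then gF j 0 0 else gS i d d').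
Proof.
rewrite -{1}(prod_delta i (gS i d d')) /Eexc prod_mul_local.
- by apply: eq_bigr => j _; case: eqP => [->|_]; rewrite ?mul1r ?mulr1.
- by move=> j; apply: local_Eexc_factor.
by move=> j; case: eqP => [->|_]; [apply: local_gS | apply: local1].
Qed.

Lemma Eexc_xpow i e : delta_seq (others i) (mono (expo_x i e)) = Eexc i * x i ^+ e.
Proof.
rewrite delta_seq_mono ?filter_uniq ?index_enum_uniq //.
have -> : x i ^+ e = gS i e 0 by rewrite /Defs.gS expr0 mulr1.
rewrite Eexc_gS; apply: eq_bigr => j _; rewrite mem_filter mem_index_enum andbT !ffunE.
by case: eqP => [->|].
Qed.

Lemma proj_delta_seq i r z : i \notin r -> proj i (delta_seq r z) = delta_seq r (proj i z).
Proof.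
elim: r => [|j r IH] //=; rewrite inE negb_or => /andP[ij ir].
by rewrite proj_delta_comm ?IH // eq_sym.
Qed.

Lemma proj_Eexc_xpow i e : proj i (Eexc i * x i ^+ e) = Eexc i * x i ^+ e.
Proof.
rewrite -Eexc_xpow proj_delta_seq ?mem_filter ?eqxx // proj_mono.
by congr (delta_seq _ (mono _)); rewrite /expo_red /expo_ray /expo_min; expo_arith.
Qed.

Lemma mcoef_Eexc_xpow i e f : mcoef (Eexc i * x i ^+ e) (expo_x i f) = (e == f)%:R.
Proof.
rewrite -Eexc_xpow mcoef_delta_seq ?mcoef_mono; last first.
  by move=> j; rewrite mem_filter => /andP[ji _]; rewrite ffunE (negbTE ji).
case: (eqVneq e f) => [->|ef]; first by rewrite eqxx.
suff /negbTE -> : expo_x i e != expo_x i f by [].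
by apply: contra ef => /eqP/(congr1 (fun k : expo => k.1 i)); rewrite !ffunE eqxx => ->.
Qed.

Lemma horner_x_expand i (R : {poly K}) :
  horner_alg (x i) R = \sum_(e < size R) R`_e *: x i ^+ e.
Proof.
rewrite -{1}(coefK R) poly_def rmorph_sum; apply: eq_bigr => e _.
rewrite -mul_polyC rmorphM /= horner_algC rmorphXn -scalerAl mul1r.
by congr (_ *: _ ^+ _); exact: horner_algX.
Qed.

Lemma Eexc_poly i (R : {poly K}) :
  Eexc i * horner_alg (x i) R = \sum_(e < size R) R`_e *: (Eexc i * x i ^+ e).
Proof.
by rewrite horner_x_expand mulr_sumr; apply: eq_bigr => e _; rewrite scalerAr.
Qed.

Lemma proj_Eexc_poly i R :
  proj i (Eexc i * horner_alg (x i) R) = Eexc i * horner_alg (x i) R.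
Proof.
rewrite !Eexc_poly (islin_sum (islin_proj i)).
by apply: eq_bigr => e _; rewrite (islin_proj i).2 proj_Eexc_xpow.
Qed.

Lemma Eexc_poly_eq0 i R : Eexc i * horner_alg (x i) R = 0 -> R = 0.
Proof.
rewrite Eexc_poly => H; apply/polyP => f; rewrite coef0.
case: (ltnP f (size R)) => hf; last by rewrite nth_default.
have := congr1 (mcoef^~ (expo_x i f)) H; rewrite /= mcoef0 (islin_sum (islin_mcoef _)).
under eq_bigr do rewrite mcoefZ mcoef_Eexc_xpow.
rewrite (bigD1 (Ordinal hf)) //= eqxx mulr1 big1 ?addr0 // => e ne.
by rewrite -val_eqE /= in ne; rewrite (negbTE ne) mulr0.
Qed.

Lemma Eexc_poly_pid i R : dimage [:: i] (Eexc i * horner_alg (x i) R) -> R = 0.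
Proof. by move/pid_proj; rewrite proj_Eexc_poly; apply: Eexc_poly_eq0. Qed.

Lemma Eexc_idem i : Eexc i * Eexc i = Eexc i.
Proof.
rewrite /Eexc prod_mul_local; [|exact: local_Eexc_factor|exact: local_Eexc_factor].
by apply: eq_bigr => j _; case: (j != i); rewrite ?mulr1 ?idem_idem.
Qed.

Lemma Eexc_poly_mul i R1 R2 :
  (Eexc i * horner_alg (x i) R1) * (Eexc i * horner_alg (x i) R2) =
  Eexc i * horner_alg (x i) (R1 * R2).
Proof.
have xE : GRing.comm (x i) (Eexc i).
  apply: commr_prod => j _; case: (eqVneq j i) => [->|ji]; rewrite ?eqxx ?ji /=.
    exact: commr1.
  by have [] := local_comm_gens (@local_gF j 0 0) (_ : i != j); rewrite // eq_sym.
have RE : GRing.comm (horner_alg (x i) R1) (Eexc i).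
  rewrite /GRing.comm horner_x_expand mulr_suml mulr_sumr; apply: eq_bigr => e _.
  by rewrite -scalerAl -scalerAr (commrX e (commr_sym xE)).
by rewrite rmorphM -mulrA (mulrA (horner_alg _ R1)) RE !mulrA Eexc_idem -mulrA.
Qed.

Definition reduced_at i (m : expo) : bool := (m.1 i == 0%N) || (m.2 i == 0%N).

Lemma mcoef_proj_reduced i a k : mcoef (proj i a) k != 0 -> reduced_at i k.
Proof.
have -> : proj i a = lin [seq (expo_red i p.1, p.2) | p <- rep a].
  by rewrite /proj /extend /lin big_map.
move/mcoef_lin_supp => /mapP [p /mapP [q _ ->] ->].
by rewrite /reduced_at /expo_red /expo_ray /expo_min !ffunE eqxx; apply/orP; lia.
Qed.

Lemma reduced_inj (a1 a2 b1 b2 N : nat) :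
  (a1 == 0%N) || (a2 == 0%N) -> (b1 == 0%N) || (b2 == 0%N) -> (a2 <= N)%N -> (b2 <= N)%N ->
  (a1 + (N - a2) = b1 + (N - b2))%N -> a1 = b1 /\ a2 = b2.
Proof. by case/orP=> /eqP -> /orP [] /eqP -> *; lia. Qed.

Lemma horner_x_Xn i e : horner_alg (x i) 'X^e = x i ^+ e.
Proof. by rewrite rmorphXn; congr (_ ^+ _); exact: horner_algX. Qed.

Lemma sw_val_others i N k :
  sw_val (fun j => j != i) N k = Eexc i * gS i (k.1 i + (N - k.2 i)) (k.2 i - N).
Proof. by rewrite Eexc_gS; apply: eq_bigr => j _; case: eqP => [->|]. Qed.

Lemma sandwich_reduced i b : b != 0 -> (forall k, mcoef b k != 0 -> reduced_at i k) ->
  exists u v (R : {poly K}), R != 0 /\ u * b * v = Eexc i * horner_alg (x i) R.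
Proof.
move=> bn red; have [m0 hm0] := nz_mcoef bn.
pose S := fun j : 'I_n => j != i.
have [ms [cms hms]] := minimal_mono S hm0.
pose N := (\max_(k <- supp b) k.2 i)%N.
have hN k : mcoef b k != 0 -> (k.2 i <= N)%N.
  move=> ck; exact: (@leq_bigmax_seq _ (supp b) xpredT (fun k : expo => k.2 i) k
    (mcoef_supp ck)).
pose d (k : expo) := (k.1 i + (N - k.2 i))%N.
have d_inj k : mcoef b k != 0 -> sw_cond S ms.1 ms.2 k -> d k = d ms -> k = ms.
  move=> ck cd edk; apply: expo_eq => j; case: (eqVneq j i) => [->|ji]; last exact: hms.
  exact: reduced_inj (red _ ck) (red _ cms) (hN _ ck) (hN _ cms) edk.
pose R := \sum_(k <- supp b) (mcoef b k * (sw_cond S ms.1 ms.2 k)%:R) *: 'X^(d k).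
exists (left_sw S ms.1), (right_sw S ms.2 N), R; split.
  apply/eqP => /(congr1 (fun P : {poly K} => P`_(d ms))); rewrite coef0 coef_sum.
  rewrite (bigD1_seq ms) ?supp_uniq ?mcoef_supp //= coefZ coefXn eqxx.
  rewrite sw_cond_refl !mulr1 big1 ?addr0; first by apply/eqP.
  move=> k kms; rewrite coefZ coefXn.
  case: (eqVneq (mcoef b k) 0) => [->|ck]; first by rewrite !mul0r.
  case: (boolP (sw_cond S ms.1 ms.2 k)) => cd; last by rewrite mulr0 mul0r.
  by case: (eqVneq (d ms) (d k)) => [edk|]; [case/eqP: kms; apply: d_inj | rewrite mulr0].
rewrite (islin_expand b (islin_sandwich _ _)) /R rmorph_sum mulr_sumr.
apply: eq_bigr => k _; rewrite sandwich_mono -mul_polyC rmorphM /= horner_algC.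
rewrite horner_x_Xn -scalerAl mul1r -scalerAr -scalerA.
case: (eqVneq (mcoef b k) 0) => [->|ck]; first by rewrite !scale0r.
case: (sw_cond S ms.1 ms.2 k); last by rewrite scale0r scaler0.
rewrite scale1r sw_val_others /Defs.gS (_ : (k.2 i - N = 0)%N) ?expr0 ?mulr1 //.
by apply/eqP; rewrite subn_eq0 hN.
Qed.

(* p_i is prime: modulo p_i, any two elements outside p_i can be sandwiched onto
   E'_i R1(x_i) and E'_i R2(x_i), whose product E'_i (R1 R2)(x_i) is outside p_i. *)
Lemma outside_pid i a : ~ dimage [:: i] a -> exists u v (R : {poly K}),
  R != 0 /\ dimage [:: i] (u * a * v - Eexc i * horner_alg (x i) R).
Proof.
move=> ha; have pa : proj i a != 0 by apply/eqP => h; apply: ha; apply/pid_proj.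
have [u [v [R [Rn E]]]] := sandwich_reduced pa (@mcoef_proj_reduced i a).
exists u, v, R; split => //; rewrite -E -mulrBl -mulrBr proj_decomp.
apply: idealMr; first exact: pid_ideal.
by apply: idealMl; [exact: pid_ideal | exists (proj_lift i a)].
Qed.

Lemma pid_prime i : is_prime (dimage [:: i]).
Proof.
split; first exact: pid_ideal.
  by move/pid_proj; rewrite proj_one; apply/eqP; exact: one_neq0.
move=> I J hI hJ IJ; apply: NNPP => /not_prime_split [a [b [Ia Pa Jb Pb]]].
have [u [v [R1 [R1n HR1]]]] := outside_pid Pa.
have [u' [v' [R2 [R2n HR2]]]] := outside_pid Pb.
set X := u * a * v; set Y := u' * b * v'.
set Z1 := Eexc i * horner_alg (x i) R1; set Z2 := Eexc i * horner_alg (x i) R2.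
have PXY : dimage [:: i] (X * Y).
  by apply: IJ; [apply: idealMr => //; apply: idealMl | apply: idealMr => //; apply: idealMl].
have PZ : dimage [:: i] (Z1 * Z2).
  have -> : Z1 * Z2 = X * Y - ((X - Z1) * Y + Z1 * (Y - Z2)).
    by rewrite mulrBl mulrBr addrA subrK opprB addrC subrK.
  apply: idealB (pid_ideal i) PXY _; case: (pid_ideal i) => _ hD _ _.
  by apply: hD; [apply: idealMr | apply: idealMl] => //; apply: pid_ideal.
move: PZ; rewrite Eexc_poly_mul => /Eexc_poly_pid /eqP; apply/negP.
exact: mulf_neq0.
Qed.

(* The zero ideal is prime: two nonzero ideals both contain the nonzero
   idempotent E, hence so does their product. *)
Definition zero_ideal (a : A) : Prop := a = 0.

Lemma zero_prime : is_prime zero_ideal.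
Proof.
split.
- by split=> [|a b -> ->|a ->|r a ->]; rewrite /zero_ideal ?addr0 ?oppr0 ?mulr0 ?mul0r.
- by move/eqP; apply/negP; exact: one_neq0.
move=> I J hI hJ IJ; apply: NNPP => /not_prime_split [a [b [Ia /eqP a0 Jb /eqP b0]]].
have := IJ _ _ (ideal_Eall hI Ia a0) (ideal_Eall hJ Jb b0).
by rewrite /zero_ideal Eall_idem; apply/eqP; exact: Eall_neq0.
Qed.

(* A prime containing E contains some p_j: it contains the product of the
   ideals p_j, which equals F(1) ⊗ ... ⊗ F(n). *)
Lemma prime_Eall_pid (Q : A -> Prop) : (0 < n)%N -> is_prime Q -> Q Eall ->
  exists j, subid (dimage [:: j]) Q.
Proof.
move=> n0 hQ QE.
suff H : forall r : seq 'I_n, uniq r -> r != [::] -> subid (dimage r) Q ->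
    exists j, subid (dimage [:: j]) Q.
  apply: (H (index_enum 'I_n)); first exact: index_enum_uniq.
    by apply/eqP => e; have := mem_index_enum (Ordinal n0); rewrite e.
  by move=> a /FtensE; apply: Ftens_ideal => //; case: hQ.
elim=> [|i r IH] // /andP[ir ur] _ hs.
case: (eqVneq r [::]) => [re|rn]; first by exists i; rewrite -re.
case: hQ => _ _ hp; case: (hp _ _ (pid_ideal i) (dimage_ideal ur)).
- move=> a b ha hb; apply: hs; apply/dimageP => /=; first by rewrite ir.
  move=> j; rewrite inE => /orP[/eqP ->|jr]; first by apply: idealMr => //; exact: pid_ideal.
  by apply: idealMl; [exact: pid_ideal | exact: dimage_sub_pid hb j jr].
- by exists i.
by move=> h; apply: IH.
Qed.

Lemma prime_nonzero_pid (Q : A -> Prop) a : (0 < n)%N -> is_prime Q -> Q a -> a != 0 ->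
  exists j, subid (dimage [:: j]) Q.
Proof.
move=> n0 hQ Qa an; apply: prime_Eall_pid => //.
exact: ideal_Eall (prime_ideal hQ) Qa an.
Qed.

Lemma ei_pid i : dimage [:: i] (delta i 1). Proof. by exists 1. Qed.

Lemma ei_neq0 i : delta i 1 != 0.
Proof.
have c1 : mcoef (delta i 1) expo0 = 1.
  rewrite -mono0 delta_mono (islinB (islin_mcoef _)) !mcoef_mono eqxx.
  suff /negbTE -> : expo_shift i expo0 != expo0 by rewrite subr0.
  by apply/eqP => /(congr1 (fun k : expo => k.1 i)); rewrite !ffunE eqxx.
by apply/eqP => h; move: c1; rewrite h mcoef0 => /eqP; rewrite eq_sym oner_eq0.
Qed.

Lemma ei_notin i j : i != j -> ~ dimage [:: j] (delta i 1).
Proof.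
move=> ij /pid_proj; rewrite proj_delta_comm 1?eq_sym // proj_one.
by apply/eqP; exact: ei_neq0.
Qed.

Lemma pid_not_sub i j : i != j -> ~ subid (dimage [:: i]) (dimage [:: j]).
Proof. by move=> ij sub; apply: (ei_notin ij); apply: sub; exact: ei_pid. Qed.

Lemma ssubid_nonzero (P Q : A -> Prop) : is_ideal Q -> ssubid Q P -> exists a, P a /\ a != 0.
Proof.
move=> hQ [_ [a [Pa Qa]]]; exists a; split => //.
by apply/eqP => a0; apply: Qa; rewrite a0; exact: ideal0.
Qed.

Lemma pid_ssub_zero i : ssubid zero_ideal (dimage [:: i]).
Proof.
split; first by move=> c ->; apply: ideal0; exact: pid_ideal.
by exists (delta i 1); split; [exact: ei_pid | apply/eqP; exact: ei_neq0].
Qed.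

(* 0 ⊊ p_i is a chain of primes, and no longer chain descends from p_i: the
   middle prime would contain some p_j, contradicting incomparability. *)
Lemma pid_height i : (0 < n)%N -> prime_height (dimage [:: i]) 1.
Proof.
move=> n0; split.
  exists (fun k => if k == 0%N then dimage [:: i] else zero_ideal); split => //.
  - by case=> [|k] _ /=; [exact: pid_prime | exact: zero_prime].
  by case=> [|k] //= _; exact: pid_ssub_zero.
case=> f [f0 fpr fss].
have [a [fa an]] := ssubid_nonzero (prime_ideal (fpr 2%N isT)) (fss 1%N isT).
have [j hj] := prime_nonzero_pid n0 (fpr 1%N isT) fa an.
have [s10 [b [fb nfb]]] := fss 0%N isT.
case: (eqVneq j i) => [ji|ji].
  by apply: nfb; apply: hj; rewrite ji; apply/f0.
by apply: (pid_not_sub ji) => c /hj /s10 /f0.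
Qed.

(* A height-one prime contains some p_j; if it were larger, P ⊋ p_j ⊋ 0 would
   be a chain of length two. *)
Lemma height1_pid (P : A -> Prop) : (0 < n)%N -> is_prime P -> prime_height P 1 ->
  exists i, eqid P (dimage [:: i]).
Proof.
move=> n0 hP [[f [f0 fpr fss]] no_chain2].
have [a [fa an]] := ssubid_nonzero (prime_ideal (fpr 1%N isT)) (fss 0%N isT).
have [j hj] := prime_nonzero_pid n0 hP (proj1 (f0 a) fa) an.
exists j => b; split; last exact: hj.
move=> Pb; apply: NNPP => nb; apply: no_chain2.
exists (fun k => if k == 0%N then P else if k == 1%N then dimage [:: j] else zero_ideal).
split => //.
- by case=> [|[|[|k]]] //= _; [exact: pid_prime | exact: zero_prime].
case=> [|[|k]] //= _; last exact: pid_ssub_zero.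
by split; [exact: hj | exists b].
Qed.

Lemma height_one_primes (P : A -> Prop) : (0 < n)%N ->
  is_prime P /\ prime_height P 1 <-> exists i, eqid P (pid x y i).
Proof.
move=> n0; split.
  case=> hP /(height1_pid n0 hP) [i e]; exists i => a.
  exact: iff_trans (e a) (iff_sym (pidE i a)).
case=> i e; have e' : eqid P (dimage [:: i]) by move=> a; apply: iff_trans (e a) (pidE i a).
split; first exact: prime_eqid e' (pid_prime i).
have [[f [f0 fpr fss]] no_chain2] := pid_height i n0.
split.
  by exists f; split => // a; apply: iff_trans (f0 a) (iff_sym (e' a)).
case=> g [g0 gpr gss]; apply: no_chain2; exists g; split => // a.
exact: iff_trans (g0 a) (e' a).
Qed.

Lemma pid_incomparable i j : i != j -> ~ subid (pid x y i) (pid x y j).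
Proof. by move=> ij sub; apply: (pid_not_sub ij) => a /pidE /sub /pidE. Qed.

Lemma pid_inter : eqid (fun a => forall i, pid x y i a) (Ftens x y).
Proof.
move=> a; rewrite FtensE dimageP ?index_enum_uniq //.
by split=> h j; [move=> _ | ]; apply/pidE; apply: h; rewrite ?mem_index_enum.
Qed.

Lemma pid_product : (0 < n)%N -> eqid (prod_ideal (pid x y)) (Ftens x y).
Proof.
move=> n0 a; split.
  case=> m [g [hg ->]]; apply/pid_inter => j; apply/pidE.
  apply: ideal_sum; first exact: pid_ideal.
  move=> t; apply: (ideal_prod (j := j)); rewrite ?mem_index_enum //; first exact: pid_ideal.
  by apply/pidE; exact: hg.
case=> m [c [k [l ->]]]; set i0 := Ordinal n0.
exists m, (fun t i => if i == i0 then c t *: gF i (k t i) (l t i) else gF i (k t i) (l t i)).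
split; last by apply: eq_bigr => t _; rewrite prod_scale_at ?index_enum_uniq ?mem_index_enum.
move=> t i; apply/pidE; have hF := gF_pid i (k t i) (l t i).
by case: (i == i0) => //; apply: dimageZ.
Qed.
End Sn.

Unset Implicit Arguments.

Theorem lemma4p2 (K : fieldType) (A : algType K) (n : nat) (x y : 'I_n -> A) :
  (0 < n)%N -> Sn_relations x y -> smon_basis x y ->
  [/\ (forall P : A -> Prop,
         is_prime P /\ prime_height P 1 <-> exists i : 'I_n, eqid P (pid x y i)),
      (forall i j : 'I_n, i != j -> ~ eqid (pid x y i) (pid x y j)),
      (forall i j : 'I_n, i != j -> ~ subid (pid x y i) (pid x y j)),
      eqid (fun a => forall i : 'I_n, pid x y i a) (Ftens x y)
    & eqid (prod_ideal (pid x y)) (Ftens x y)].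
Proof.
move=> n0 rels basis; split.
- by move=> P; apply: height_one_primes.
- by move=> i j ij e; apply: (pid_incomparable rels basis ij) => a /e.
- exact: pid_incomparable.
- exact: pid_inter.
exact: pid_product.
Qed.
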